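(* Consider the two-tubes TFE equations (defined in the context). There exist exactly two propagating terraces consisting of two traveling waves connecting $(-1,-1)$ to $(1,1)$ (traveling wave profiles counted up to translation of the variable $y-vt$). In both, the speeds are $v_1^*=-1/4$ and $v_2^*=1/4$; the intermediate state is $\sigma_1=(1/2,-1/2)$ for one of them and $\sigma_1=(-1/2,1/2)$ for the other. That is, the terraces are $\sigma_0=(-1,-1)\to\sigma_1\to\sigma_2=(1,1)$ with $\sigma_1\in\{(1/2,-1/2),(-1/2,1/2)\}$.
   Context: Two-tubes TFE equations: unknowns $c_1,c_2$, real functions of $(t,y)\in[0,\infty)\times\mathbb{R}$, satisfying $$\partial_t c_1+\partial_y(u_1c_1)-\partial_{yy}c_1=-f,\qquad \partial_t c_2+\partial_y(u_2c_2)-\partial_{yy}c_2=f,$$ with $u_1=(c_2-c_1)/2$, $u_2=-u_1$, and $f=-(\partial_y u_1)\,c_1$ if $\partial_y u_1\le 0$, $f=-(\partial_y u_1)\,c_2$ if $\partial_y u_1\ge0$. A traveling wave with speed $v$ connecting $g_-,g_+\in\mathbb{R}^2$ is a solution of the form $(c_1,c_2)(t,y)=\tilde g(y-vt)$ with $\tilde g:\mathbb{R}\to\mathbb{R}^2$ continuous (and smooth enough to solve the equations classically), $\tilde g(-\infty)=g_-$, $\tilde g(+\infty)=g_+$. A propagating terrace connecting $\alpha$ to $\beta$ ($\alpha,\beta\in\mathbb{R}^2$) is a pair of finite sequences $(\sigma_k)_{0\le k\le N}$, $(g_k)_{1\le k\le N}$ with each $\sigma_k\in\mathbb{R}^2$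 a stationary (constant) solution, $\sigma_0=\alpha$, $\sigma_N=\beta$, each $g_k$ a traveling wave connecting $\sigma_{k-1}$ to $\sigma_k$ with speed $v_k$, and $v_1\le\dots\le v_N$. ''Two traveling waves'' means $N=2$. *)

From Stdlib Require Import Reals.
From Coquelicot Require Import Coquelicot.
Open Scope R_scope.

Definition field := R -> R -> R.

Definition d_t (c : field) (t y : R) : R := Derive (fun s => c s y) t.
Definition d_y (c : field) (t y : R) : R := Derive (fun z => c t z) y.
Definition d_yy (c : field) (t y : R) : R := Derive_n (fun z => c t z) 2 y.

Definition u1 (c1 c2 : field) : field := fun t y => (c2 t y - c1 t y) / 2.
Definition u2 (c1 c2 : field) : field := fun t y => - u1 c1 c2 t y.

(* f = -(d_y u1) c1 if d_y u1 <= 0, and -(d_y u1) c2 otherwise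
   (both branches agree when d_y u1 = 0). *)
Definition reaction (c1 c2 : field) (t y : R) : R :=
  let d := d_y (u1 c1 c2) t y in
  if Rle_dec d 0 then - d * c1 t y else - d * c2 t y.

Definition classical_regular (c : field) : Prop :=
  forall t, 0 <= t ->
    (forall y, ex_derive (fun s => c s y) t) /\
    (forall y, ex_derive (fun z => c t z) y) /\
    (forall y, ex_derive (Derive (fun z => c t z)) y).

Definition TFE_solution (c1 c2 : field) : Prop :=
  classical_regular c1 /\ classical_regular c2 /\
  forall t y, 0 <= t ->
    d_t c1 t y + d_y (fun t z => u1 c1 c2 t z * c1 t z) t y - d_yy c1 t y
      = - reaction c1 c2 t y /\
    d_t c2 t y + d_y (fun t z => u2 c1 c2 t z * c2 t z) t y - d_yy c2 t y
      = reaction c1 c2 t y.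

Definition stationary (s : R * R) : Prop :=
  TFE_solution (fun _ _ => fst s) (fun _ _ => snd s).

Definition traveling_wave (g1 g2 : R -> R) (v : R) (gm gp : R * R) : Prop :=
  (forall x, continuous g1 x) /\ (forall x, continuous g2 x) /\
  is_lim g1 m_infty (fst gm) /\ is_lim g2 m_infty (snd gm) /\
  is_lim g1 p_infty (fst gp) /\ is_lim g2 p_infty (snd gp) /\
  TFE_solution (fun t y => g1 (y - v * t)) (fun t y => g2 (y - v * t)).

Definition terrace2 (alpha s1 beta : R * R) (v1 v2 : R)
  (g1 g2 h1 h2 : R -> R) : Prop :=
  stationary alpha /\ stationary s1 /\ stationary beta /\
  traveling_wave g1 g2 v1 alpha s1 /\ traveling_wave h1 h2 v2 s1 beta /\
  v1 <= v2.

Definition same_up_to_translation (g1 g2 k1 k2 : R -> R) : Prop :=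
  exists a : R, forall x, k1 x = g1 (x + a) /\ k2 x = g2 (x + a).

From Stdlib Require Import Reals Lra.
From Coquelicot Require Import Coquelicot.
Open Scope R_scope.

(* If it leaves (-1, -1),
   adding the two equations gives a first integral, after which sg = g1 + g2 + 2, d = g2 - g1 and
   z = d' solve an autonomous system with parameter m = -v.  Letting x -> +oo in sg' yields
   m sg(+oo) = d(+oo)^2 / 2.  For m > 0 and d(+oo) < 0, a barrier argument followed by Gronwall's
   lemma shows that sg' + 2 z vanishes identically, i.e. sg = -2 d and d' = d (m + d / 4); hence
   d(+oo) = -4 m and d is a logistic function, unique up to translation.
   The point reflection (x, c) -> (-x, -c) turns the second wave of a terrace into a wave leaving
   (-1, -1) with the opposite speed, and the exchange c1 <-> c2 reverses the sign of d(+oo).  With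
   v1 <= v2 the two speed relations force m > 0 for both waves, and comparing the two resulting
   logistic fronts gives v1 = -1/4, v2 = 1/4 and the intermediate state (1/2, -1/2), or
   (-1/2, 1/2) after the exchange.  An intermediate state with d(+oo) = 0 would need
   sg(+oo) <= 0 for both waves, which is incompatible. *)

(* Coquelicot's rules are stated with the abstract [plus], [scal], [mult]; these copies are
   stated on [R] so that they unify with ordinary real expressions. *)
Lemma is_derive_eq (f : R -> R) (x a b : R) : is_derive f x a -> a = b -> is_derive f x b.
Proof. now intros H <-. Qed.

Lemma is_derive_const' (c x : R) : is_derive (fun _ => c) x 0.
Proof. exact (is_derive_const c x). Qed.

Lemma is_derive_id' (x : R) : is_derive (fun y => y) x 1.
Proof. exact (is_derive_id x). Qed.

Lemma is_derive_plus' (f g : R -> R) (x a b : R) :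
  is_derive f x a -> is_derive g x b -> is_derive (fun y => f y + g y) x (a + b).
Proof. exact (is_derive_plus f g x a b). Qed.

Lemma is_derive_minus' (f g : R -> R) (x a b : R) :
  is_derive f x a -> is_derive g x b -> is_derive (fun y => f y - g y) x (a - b).
Proof. exact (is_derive_minus f g x a b). Qed.

Lemma is_derive_mult' (f g : R -> R) (x a b : R) :
  is_derive f x a -> is_derive g x b -> is_derive (fun y => f y * g y) x (a * g x + f x * b).
Proof. intros Hf Hg; exact (is_derive_mult f g x a b Hf Hg Rmult_comm). Qed.

Lemma is_derive_scal' (c : R) (f : R -> R) (x a : R) :
  is_derive f x a -> is_derive (fun y => c * f y) x (c * a).
Proof.
  intros H; apply (is_derive_eq _ _ (0 * f x + c * a)); [|ring].
  exact (is_derive_mult' _ _ _ _ _ (is_derive_const' c x) H).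
Qed.

Lemma is_derive_opp' (f : R -> R) (x a : R) : is_derive f x a -> is_derive (fun y => - f y) x (- a).
Proof. exact (is_derive_opp f x a). Qed.

Lemma is_derive_comp' (f g : R -> R) (x a b : R) :
  is_derive f (g x) a -> is_derive g x b -> is_derive (fun y => f (g y)) x (b * a).
Proof. exact (is_derive_comp f g x a b). Qed.

Lemma is_derive_sq (f : R -> R) (x a : R) : is_derive f x a -> is_derive (fun y => f y ^ 2) x (2 * f x * a).
Proof.
  intros H; apply (is_derive_ext (fun y => f y * f y)); [intros; simpl; ring|].
  apply (is_derive_eq _ _ _ _ (is_derive_mult' _ _ _ _ _ H H)); ring.
Qed.

Lemma is_derive_half_sq (f : R -> R) (x a : R) : is_derive f x a -> is_derive (fun y => f y ^ 2 / 2) x (f x * a).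
Proof.
  intros H; apply (is_derive_ext (fun y => / 2 * f y ^ 2)); [intros; simpl; field|].
  apply (is_derive_eq _ _ _ _ (is_derive_scal' _ _ _ _ (is_derive_sq _ _ _ H))); field.
Qed.

Lemma is_derive_continuity_pt (f : R -> R) (x l : R) : is_derive f x l -> continuity_pt f x.
Proof.
  intros H; rewrite is_derive_Reals in H; apply derivable_continuous_pt; now exists l.
Qed.

Lemma continuity_pt_eps (f : R -> R) (x e : R) : continuity_pt f x -> 0 < e ->
  exists d, 0 < d /\ forall y, Rabs (y - x) < d -> Rabs (f y - f x) < e.
Proof.
  intros H He; destruct (H e He) as [d [Hd Hy]]; exists d; split; [exact Hd|].
  intros y Hyx; destruct (Req_dec y x) as [->|Hne].
  - now rewrite Rminus_diag, Rabs_R0.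
  - apply (Hy y); repeat split; auto.
Qed.

Lemma continuity_pt_lt_near (f : R -> R) (t a : R) : continuity_pt f t -> f t < a ->
  exists d, 0 < d /\ forall s, Rabs (s - t) < d -> f s < a.
Proof.
  intros Hc Ht; destruct (continuity_pt_eps f t (a - f t) Hc) as [d [Hd Hs]]; [lra|].
  exists d; split; [exact Hd|]; intros s Hst; specialize (Hs s Hst).
  apply Rabs_def2 in Hs; lra.
Qed.

Lemma locally_lt (f : R -> R) (t a : R) : continuity_pt f t -> f t < a -> locally t (fun s => f s < a).
Proof.
  intros Hc Ht; destruct (continuity_pt_lt_near f t a Hc Ht) as [d [Hd Hs]].
  exists (mkposreal d Hd); intros s Hs'; apply Hs, Hs'.
Qed.

Lemma mean_value (f f' : R -> R) (a b : R) : (forall x, is_derive f x (f' x)) -> a < b ->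
  exists c, a <= c <= b /\ f b - f a = f' c * (b - a).
Proof.
  intros H Hab; destruct (MVT_gen f a b f') as [c [Hc E]].
  - intros; apply H.
  - intros; eapply is_derive_continuity_pt, H.
  - exists c; rewrite Rmin_left, Rmax_right in Hc by lra; auto.
Qed.

Lemma derive0_const (f : R -> R) : (forall x, is_derive f x 0) -> forall x y, f x = f y.
Proof.
  intros H x y; destruct (Rtotal_order x y) as [Hl|[->|Hl]]; [| reflexivity |].
  - destruct (mean_value f (fun _ => 0) x y H Hl) as [c [_ E]]; lra.
  - destruct (mean_value f (fun _ => 0) y x H Hl) as [c [_ E]]; lra.
Qed.

Lemma derive_nonneg_incr (f f' : R -> R) : (forall x, is_derive f x (f' x)) -> (forall x, 0 <= f' x) ->
  forall x y, x <= y -> f x <= f y.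
Proof.
  intros H Hp x y Hxy; destruct (Req_dec x y) as [->|Hne]; [lra|].
  destruct (mean_value f f' x y H) as [c [_ E]]; [lra|].
  specialize (Hp c); nra.
Qed.

Lemma is_derive_exp_weight (V V' : R -> R) (c x : R) : (forall y, is_derive V y (V' y)) ->
  is_derive (fun y => V y * exp (c * y)) x ((V' x + c * V x) * exp (c * x)).
Proof.
  intros HV; apply (is_derive_eq _ _ _ _ (is_derive_mult' _ _ _ _ _ (HV x)
    (is_derive_comp' exp (fun y => c * y) x (exp (c * x)) (c * 1)
      (proj2 (is_derive_Reals _ _ _) (derivable_pt_lim_exp _))
      (is_derive_scal' c _ _ _ (is_derive_id' x))))).
  ring.
Qed.

Lemma gronwall (V V' : R -> R) (K x0 : R) : (forall x, is_derive V x (V' x)) -> (forall x, 0 <= V x) ->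
  (forall x, Rabs (V' x) <= K * V x) -> V x0 = 0 -> forall x, V x = 0.
Proof.
  intros HV Hp HK H0 x; apply Rle_antisym; [|apply Hp].
  assert (Hexp : forall y, 0 < exp y) by apply exp_pos.
  destruct (Rle_lt_dec x0 x) as [Hx|Hx].
  - assert (Hdecr := derive_nonneg_incr (fun y => - (V y * exp (- K * y)))
      (fun y => - ((V' y + - K * V y) * exp (- K * y)))
      (fun y => is_derive_opp' _ _ _ (is_derive_exp_weight V V' (- K) y HV))).
    enough (V x * exp (- K * x) <= 0) by (specialize (Hexp (- K * x)); nra).
    enough (- (V x0 * exp (- K * x0)) <= - (V x * exp (- K * x))) by (rewrite H0 in *; lra).
    apply Hdecr; [|exact Hx]; intros y; specialize (HK y); specialize (Hexp (- K * y)).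
    apply Rabs_le_between in HK; nra.
  - assert (Hincr := derive_nonneg_incr (fun y => V y * exp (K * y))
      (fun y => (V' y + K * V y) * exp (K * y)) (fun y => is_derive_exp_weight V V' K y HV)).
    enough (V x * exp (K * x) <= 0) by (specialize (Hexp (K * x)); nra).
    enough (V x * exp (K * x) <= V x0 * exp (K * x0)) by (rewrite H0 in *; lra).
    apply Hincr; [|lra]; intros y; specialize (HK y); specialize (Hexp (K * y)).
    apply Rabs_le_between in HK; nra.
Qed.

Lemma increases_right (f : R -> R) (t l a : R) : is_derive f t l -> a <= f t -> (f t = a -> 0 < l) ->
  exists e, 0 < e /\ forall s, t < s < t + e -> a < f s.
Proof.
  intros H Ha Hl; destruct (Req_dec (f t) a) as [E|Ne].
  - specialize (Hl E); rewrite is_derive_Reals in H; destruct (H l Hl) as [d Hd].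
    exists d; split; [apply cond_pos|]; intros s Hs.
    specialize (Hd (s - t) ltac:(lra) ltac:(rewrite Rabs_right; lra)).
    replace (t + (s - t)) with s in Hd by ring; apply Rabs_def2 in Hd.
    assert (0 < (f s - f t) / (s - t)) by lra.
    enough (0 < f s - f t) by lra.
    replace (f s - f t) with ((f s - f t) / (s - t) * (s - t)) by (field; lra).
    apply Rmult_lt_0_compat; lra.
  - destruct (continuity_pt_eps f t (f t - a) (is_derive_continuity_pt _ _ _ H)) as [d [Hd Hy]]; [lra|].
    exists d; split; [exact Hd|]; intros s Hs.
    specialize (Hy s ltac:(rewrite Rabs_right; lra)); apply Rabs_def2 in Hy; lra.
Qed.

Lemma real_induction_ge (h : R -> R) (x0 a : R) : a <= h x0 ->
  (forall t, x0 <= t -> h t < a -> exists d, 0 < d /\ forall s, Rabs (s - t) < d -> h s < a) ->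
  (forall t, x0 <= t -> a <= h t -> exists e, 0 < e /\ forall s, t < s < t + e -> a <= h s) ->
  forall y, x0 <= y -> a <= h y.
Proof.
  intros H0 Hopen Hright y Hy; destruct (Rle_lt_dec a (h y)) as [ok|Hya]; [exact ok|exfalso].
  set (E t := x0 <= t <= y /\ a <= h t).
  destruct (completeness E) as [s [Hub Hlub]].
  { exists y; intros t [[_ Ht] _]; exact Ht. }
  { exists x0; split; [lra|exact H0]. }
  assert (Hx0s : x0 <= s) by (apply Hub; split; [lra|exact H0]).
  assert (Hsy : s <= y) by (apply Hlub; intros t [[_ Ht] _]; exact Ht).
  assert (Hhs : a <= h s).
  { destruct (Rle_lt_dec a (h s)) as [ok|Hlt]; [exact ok|].
    destruct (Hopen s Hx0s Hlt) as [d [Hd Hs]].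
    enough (s <= s - d / 2) by lra.
    apply Hlub; intros t Et; destruct (Rle_lt_dec t (s - d / 2)) as [ok|Hgt]; [exact ok|].
    assert (t <= s) by (apply Hub, Et).
    specialize (Hs t ltac:(rewrite Rabs_left1; lra)); destruct Et; lra. }
  assert (Hsy' : s < y) by (destruct Hsy as [Hlt|Heq]; [exact Hlt|subst; lra]).
  destruct (Hright s Hx0s Hhs) as [e [He Hs]].
  set (t := Rmin (s + e / 2) y).
  assert (s < t) by (apply Rmin_glb_lt; lra).
  assert (t <= s + e / 2) by apply Rmin_l.
  enough (t <= s) by lra.
  apply Hub; split; [split; [lra|apply Rmin_r]|]; apply Hs; lra.
Qed.

Lemma stays_above_min (f f' g g' : R -> R) (x0 a : R) :
  (forall x, is_derive f x (f' x)) -> (forall x, is_derive g x (g' x)) -> a <= f x0 -> a <= g x0 ->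
  (forall t, x0 <= t -> a <= g t -> f t = a -> 0 < f' t) ->
  (forall t, x0 <= t -> a <= f t -> g t = a -> 0 < g' t) ->
  forall t, x0 <= t -> a <= f t /\ a <= g t.
Proof.
  intros Hf Hg Hf0 Hg0 Hfa Hga t Ht.
  enough (a <= Rmin (f t) (g t)) by (split; eapply Rle_trans; eauto; [apply Rmin_l|apply Rmin_r]).
  revert t Ht; apply real_induction_ge; [now apply Rmin_glb|..].
  - intros t _ Hlt; unfold Rmin in Hlt; destruct (Rle_dec (f t) (g t)).
    + destruct (continuity_pt_lt_near f t a (is_derive_continuity_pt _ _ _ (Hf t)) Hlt) as [d [Hd Hs]].
      exists d; split; [exact Hd|]; intros s Hst; eapply Rle_lt_trans; [apply Rmin_l|auto].
    + destruct (continuity_pt_lt_near g t a (is_derive_continuity_pt _ _ _ (Hg t)) Hlt) as [d [Hd Hs]].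
      exists d; split; [exact Hd|]; intros s Hst; eapply Rle_lt_trans; [apply Rmin_r|auto].
  - intros t Ht Hge.
    assert (Hft : a <= f t) by (eapply Rle_trans; [exact Hge|apply Rmin_l]).
    assert (Hgt : a <= g t) by (eapply Rle_trans; [exact Hge|apply Rmin_r]).
    destruct (increases_right f t (f' t) a (Hf t) Hft (Hfa t Ht Hgt)) as [e1 [He1 Hs1]].
    destruct (increases_right g t (g' t) a (Hg t) Hgt (Hga t Ht Hft)) as [e2 [He2 Hs2]].
    exists (Rmin e1 e2); split; [now apply Rmin_glb_lt|]; intros s Hs.
    assert (Rmin e1 e2 <= e1) by apply Rmin_l; assert (Rmin e1 e2 <= e2) by apply Rmin_r.
    apply Rmin_glb; left; [apply Hs1|apply Hs2]; lra.
Qed.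

Lemma stays_above (f f' : R -> R) (x0 : R) : (forall x, is_derive f x (f' x)) ->
  (forall t, x0 <= t -> f t = f x0 -> 0 < f' t) -> forall t, x0 <= t -> f x0 <= f t.
Proof.
  intros Hf H t Ht.
  apply (stays_above_min f f' f f' x0 (f x0) Hf Hf (Rle_refl _) (Rle_refl _)); auto.
Qed.

Lemma is_derive_squeeze0 (f g : R -> R) (x : R) : (forall y, 0 <= f y <= g y) -> g x = 0 ->
  is_derive g x 0 -> is_derive f x 0.
Proof.
  intros Hfg Hgx Hg; rewrite is_derive_Reals in *; intros e He.
  destruct (Hg e He) as [d Hd]; exists d; intros h Hh Hhd; specialize (Hd h Hh Hhd).
  assert (Hfx : f x = 0) by (specialize (Hfg x); lra).
  rewrite Hgx, Rminus_0_r, Rminus_0_r in Hd; rewrite Hfx, Rminus_0_r, Rminus_0_r.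
  eapply Rle_lt_trans; [|exact Hd].
  rewrite !Rabs_div by exact Hh; apply Rmult_le_compat_r.
  - left; apply Rinv_0_lt_compat, Rabs_pos_lt, Hh.
  - specialize (Hfg (x + h)); rewrite !Rabs_right; lra.
Qed.

Lemma is_derive_sq_Rmax0 (z : R -> R) (x l : R) : is_derive z x l ->
  is_derive (fun y => Rmax (z y) 0 ^ 2) x (2 * Rmax (z x) 0 * l).
Proof.
  intros H; assert (Hc := is_derive_continuity_pt _ _ _ H).
  destruct (Rtotal_order (z x) 0) as [Hn|[H0|Hp]].
  - rewrite Rmax_right by lra.
    apply (is_derive_ext_loc (fun _ => 0)).
    + apply (filter_imp (fun y => z y < 0)); [|exact (locally_lt z x 0 Hc Hn)].
      intros y Hy; rewrite Rmax_right by lra; simpl; ring.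
    + apply (is_derive_eq _ _ _ _ (is_derive_const' 0 x)); ring.
  - rewrite H0, Rmax_left, Rmult_0_r, Rmult_0_l by lra.
    apply (is_derive_squeeze0 _ (fun y => z y ^ 2)).
    + intros y; split; [apply pow2_ge_0|].
      unfold Rmax; destruct (Rle_dec (z y) 0); simpl; nra.
    + rewrite H0; ring.
    + apply (is_derive_eq _ _ _ _ (is_derive_sq _ _ _ H)); rewrite H0; ring.
  - rewrite Rmax_left by lra.
    apply (is_derive_ext_loc (fun y => z y ^ 2)).
    + apply (filter_imp (fun y => - z y < 0)).
      * intros y Hy; rewrite Rmax_left by lra; reflexivity.
      * apply (locally_lt (fun y => - z y)); [|lra].
        exact (is_derive_continuity_pt _ _ _ (is_derive_opp' _ _ _ H)).
    + exact (is_derive_sq _ _ _ H).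
Qed.

Lemma is_lim_p_infty_eps (f : R -> R) (L e : R) : is_lim f p_infty L -> 0 < e ->
  exists M, forall x, M <= x -> Rabs (f x - L) < e.
Proof.
  intros H He; apply is_lim_spec in H; destruct (H (mkposreal e He)) as [M HM].
  exists (M + 1); intros x Hx; apply (HM x); lra.
Qed.

Lemma is_lim_m_infty_eps (f : R -> R) (L e : R) : is_lim f m_infty L -> 0 < e ->
  exists M, forall x, x <= M -> Rabs (f x - L) < e.
Proof.
  intros H He; apply is_lim_spec in H; destruct (H (mkposreal e He)) as [M HM].
  exists (M - 1); intros x Hx; apply (HM x); lra.
Qed.

Lemma eps_is_lim_p_infty (f : R -> R) (L : R) :
  (forall e, 0 < e -> exists M, forall x, M <= x -> Rabs (f x - L) < e) -> is_lim f p_infty L.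
Proof.
  intros H; apply is_lim_spec; intros [e He]; destruct (H e He) as [M HM].
  exists M; intros x Hx; apply HM; simpl; lra.
Qed.

Lemma eps_is_lim_m_infty (f : R -> R) (L : R) :
  (forall e, 0 < e -> exists M, forall x, x <= M -> Rabs (f x - L) < e) -> is_lim f m_infty L.
Proof.
  intros H; apply is_lim_spec; intros [e He]; destruct (H e He) as [M HM].
  exists M; intros x Hx; apply HM; simpl; lra.
Qed.

Lemma is_lim_reflect_p_infty (f : R -> R) (L : R) : is_lim f m_infty L -> is_lim (fun x => f (- x)) p_infty L.
Proof.
  intros H; apply eps_is_lim_p_infty; intros e He.
  destruct (is_lim_m_infty_eps f L e H He) as [M HM]; exists (- M); intros x Hx; apply HM; lra.
Qed.

Lemma is_lim_reflect_m_infty (f : R -> R) (L : R) : is_lim f p_infty L -> is_lim (fun x => f (- x)) m_infty L.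
Proof.
  intros H; apply eps_is_lim_m_infty; intros e He.
  destruct (is_lim_p_infty_eps f L e H He) as [M HM]; exists (- M); intros x Hx; apply HM; lra.
Qed.

Lemma is_lim_opp' (f : R -> R) (x : Rbar) (L : R) : is_lim f x L -> is_lim (fun y => - f y) x (- L).
Proof. exact (is_lim_opp f x L). Qed.

Lemma is_lim_sq (f : R -> R) (x : Rbar) (L : R) : is_lim f x L -> is_lim (fun y => f y ^ 2) x (L ^ 2).
Proof.
  intros H; apply (is_lim_ext (fun y => f y * f y)); [intros; simpl; ring|].
  replace (L ^ 2) with (L * L) by ring; exact (is_lim_mult f f x L L H H I).
Qed.

Lemma is_lim_const_eq (c : R) (x : Rbar) (L : R) : is_lim (fun _ => c) x L -> c = L.
Proof.
  intros H; assert (E := is_lim_unique _ _ _ H); rewrite Lim_const in E; now injection E.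
Qed.

Lemma derive_away_from_0_no_lim (f f' : R -> R) (L c X : R) : (forall x, is_derive f x (f' x)) ->
  is_lim f p_infty L -> 0 < c -> ~ (forall x, X <= x -> c <= Rabs (f' x)).
Proof.
  intros HD HL Hc HX; destruct (is_lim_p_infty_eps f L (c / 2) HL) as [M HM]; [lra|].
  set (x1 := Rmax X M); assert (X <= x1) by apply Rmax_l; assert (M <= x1) by apply Rmax_r.
  destruct (mean_value f f' x1 (x1 + 1) HD) as [k [Hk E]]; [lra|].
  replace (x1 + 1 - x1) with 1 in E by ring.
  assert (H1 := HM x1 ltac:(lra)); assert (H2 := HM (x1 + 1) ltac:(lra)); assert (H3 := HX k ltac:(lra)).
  apply Rabs_def2 in H1; apply Rabs_def2 in H2; unfold Rabs in H3; destruct (Rcase_abs (f' k)); lra.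
Qed.

Lemma is_lim_derive_p_infty (f f' : R -> R) (L l : R) : (forall x, is_derive f x (f' x)) ->
  is_lim f p_infty L -> is_lim f' p_infty l -> l = 0.
Proof.
  intros HD HL Hl; destruct (Req_dec l 0) as [|Hn]; [assumption|exfalso].
  assert (Ha : 0 < Rabs l) by (apply Rabs_pos_lt, Hn).
  destruct (is_lim_p_infty_eps f' l (Rabs l / 2) Hl) as [M HM]; [lra|].
  apply (derive_away_from_0_no_lim f f' L (Rabs l / 2) M HD HL); [lra|].
  intros x Hx; specialize (HM x Hx); unfold Rabs in *.
  destruct (Rcase_abs (f' x - l)), (Rcase_abs l), (Rcase_abs (f' x)); lra.
Qed.

Lemma is_lim_derive_m_infty (f f' : R -> R) (L l : R) : (forall x, is_derive f x (f' x)) ->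
  is_lim f m_infty L -> is_lim f' m_infty l -> l = 0.
Proof.
  intros HD HL Hl.
  enough (- l = 0) by lra.
  apply (is_lim_derive_p_infty (fun x => f (- x)) (fun x => - f' (- x)) L).
  - intros x; apply (is_derive_eq _ _ _ _ (is_derive_comp' f Ropp x _ _ (HD (- x))
      (is_derive_opp' _ _ _ (is_derive_id' x)))); ring.
  - exact (is_lim_reflect_p_infty f L HL).
  - exact (is_lim_opp' _ _ _ (is_lim_reflect_p_infty f' l Hl)).
Qed.

Lemma bounded_of_lim (f : R -> R) (L1 L2 : R) : (forall x, continuity_pt f x) ->
  is_lim f p_infty L1 -> is_lim f m_infty L2 -> exists D, forall x, Rabs (f x) <= D.
Proof.
  intros Hc H1 H2.
  destruct (is_lim_p_infty_eps f L1 1 H1 Rlt_0_1) as [M1 HM1].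
  destruct (is_lim_m_infty_eps f L2 1 H2 Rlt_0_1) as [M2 HM2].
  set (a := Rmin M1 M2); set (b := Rmax M1 M2).
  assert (Hab : a <= b) by (apply Rle_trans with M1; [apply Rmin_l|apply Rmax_l]).
  destruct (continuity_ab_maj f a b Hab (fun c _ => Hc c)) as [xM [HxM _]].
  destruct (continuity_ab_min f a b Hab (fun c _ => Hc c)) as [xm [Hxm _]].
  exists (Rabs L1 + Rabs L2 + 1 + Rabs (f xM) + Rabs (f xm)); intros x.
  assert (0 <= Rabs L1) by apply Rabs_pos; assert (0 <= Rabs L2) by apply Rabs_pos.
  assert (0 <= Rabs (f xM)) by apply Rabs_pos; assert (0 <= Rabs (f xm)) by apply Rabs_pos.
  destruct (Rle_lt_dec M1 x) as [h1|h1]; [|destruct (Rle_lt_dec x M2) as [h2|h2]].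
  - specialize (HM1 x h1); apply Rabs_def2 in HM1; apply Rabs_le_between.
    assert (L1 <= Rabs L1) by apply Rle_abs; assert (- L1 <= Rabs L1) by apply Rabs_maj2; lra.
  - specialize (HM2 x h2); apply Rabs_def2 in HM2; apply Rabs_le_between.
    assert (L2 <= Rabs L2) by apply Rle_abs; assert (- L2 <= Rabs L2) by apply Rabs_maj2; lra.
  - assert (Hx : a <= x <= b).
    { split; [apply Rle_trans with M2; [apply Rmin_r|lra]|apply Rle_trans with M1; [lra|apply Rmax_l]]. }
    specialize (HxM x Hx); specialize (Hxm x Hx); apply Rabs_le_between.
    assert (f xM <= Rabs (f xM)) by apply Rle_abs; assert (- f xm <= Rabs (f xm)) by apply Rabs_maj2; lra.
Qed.

Lemma incr_lim_m_infty_le (f : R -> R) (L : R) : (forall x y, x <= y -> f x <= f y) ->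
  is_lim f m_infty L -> forall x, L <= f x.
Proof.
  intros Hm HL x; destruct (Rle_lt_dec L (f x)) as [ok|Hlt]; [exact ok|exfalso].
  destruct (is_lim_m_infty_eps f L (L - f x) HL) as [M HM]; [lra|].
  specialize (HM (Rmin x M) (Rmin_r _ _)); specialize (Hm (Rmin x M) x (Rmin_l _ _)).
  apply Rabs_def2 in HM; lra.
Qed.

Lemma incr_lim_p_infty_ge (f : R -> R) (L : R) : (forall x y, x <= y -> f x <= f y) ->
  is_lim f p_infty L -> forall x, f x <= L.
Proof.
  intros Hm HL x; destruct (Rle_lt_dec (f x) L) as [ok|Hlt]; [exact ok|exfalso].
  destruct (is_lim_p_infty_eps f L (f x - L) HL) as [M HM]; [lra|].
  specialize (HM (Rmax x M) (Rmax_r _ _)); specialize (Hm x (Rmax x M) (Rmax_l _ _)).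
  apply Rabs_def2 in HM; lra.
Qed.

Lemma quadratic_form_bound (p q r a w K : R) : Rabs p + Rabs q / 2 <= K -> Rabs r + Rabs q / 2 <= K ->
  Rabs (p * a ^ 2 + q * a * w + r * w ^ 2) <= K * (a ^ 2 + w ^ 2).
Proof.
  intros Hp Hr.
  assert (Haw : 2 * (Rabs a * Rabs w) <= a ^ 2 + w ^ 2).
  { rewrite <- (pow2_abs a), <- (pow2_abs w).
    assert (0 <= (Rabs a - Rabs w) ^ 2) by apply pow2_ge_0; nra. }
  eapply Rle_trans; [apply Rabs_triang|]; eapply Rle_trans; [apply Rplus_le_compat_r, Rabs_triang|].
  rewrite !Rabs_mult, !(Rabs_right (_ ^ 2)) by (apply Rle_ge, pow2_ge_0).
  assert (0 <= Rabs q) by apply Rabs_pos; assert (0 <= a ^ 2) by apply pow2_ge_0;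
    assert (0 <= w ^ 2) by apply pow2_ge_0.
  nra.
Qed.

Lemma pow2_eq_0 (x : R) : x ^ 2 = 0 -> x = 0.
Proof. rewrite <- Rsqr_pow2; apply Rsqr_eq_0. Qed.

Lemma Rmax0_mul (y : R) : y * Rmax y 0 = Rmax y 0 ^ 2.
Proof. unfold Rmax; destruct (Rle_dec y 0); ring. Qed.

Lemma Rabs_Rmax0_mul (y : R) : Rabs y * Rmax y 0 = Rmax y 0 ^ 2.
Proof. unfold Rmax; destruct (Rle_dec y 0); [ring|rewrite Rabs_right by lra; ring]. Qed.

Lemma Rabs_add_self (y : R) : y + Rabs y = 2 * Rmax y 0.
Proof. unfold Rmax, Rabs; destruct (Rle_dec y 0), (Rcase_abs y); lra. Qed.

Lemma gronwall_pos_part (a a' y y' p q r : R -> R) (K x0 : R) :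
  (forall x, is_derive a x (a' x)) -> (forall x, is_derive y x (y' x)) ->
  (forall x, 2 * a x * a' x + 2 * Rmax (y x) 0 * y' x
             = p x * a x ^ 2 + q x * a x * Rmax (y x) 0 + r x * Rmax (y x) 0 ^ 2) ->
  (forall x, Rabs (p x) + Rabs (q x) / 2 <= K) -> (forall x, Rabs (r x) + Rabs (q x) / 2 <= K) ->
  a x0 = 0 -> y x0 <= 0 -> forall x, a x = 0 /\ y x <= 0.
Proof.
  intros Ha Hy HU' Hpq Hrq Ha0 Hy0.
  set (U x := a x ^ 2 + Rmax (y x) 0 ^ 2).
  assert (HU : forall x, is_derive U x (2 * a x * a' x + 2 * Rmax (y x) 0 * y' x)).
  { intros x; exact (is_derive_plus' _ _ _ _ _ (is_derive_sq _ _ _ (Ha x)) (is_derive_sq_Rmax0 _ _ _ (Hy x))). }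
  assert (Hsq : forall x, 0 <= a x ^ 2 /\ 0 <= Rmax (y x) 0 ^ 2) by (split; apply pow2_ge_0).
  assert (HU0 : forall x, U x = 0).
  { apply (gronwall U _ K x0 HU).
    - intros x; specialize (Hsq x); unfold U; lra.
    - intros x; rewrite HU'; apply quadratic_form_bound; auto.
    - unfold U; rewrite Ha0, Rmax_right by exact Hy0; ring. }
  intros x; specialize (HU0 x); specialize (Hsq x); unfold U in HU0.
  split; [apply pow2_eq_0; lra|].
  enough (Hw : Rmax (y x) 0 = 0) by (rewrite <- Hw; apply Rmax_l).
  apply pow2_eq_0; lra.
Qed.

(* For a wave leaving (-1, -1) with speed v: m = -v, sg = g1 + g2 + 2, d = g2 - g1, z = d'. *)
Definition reduced_system (m : R) (sg d z : R -> R) : Prop :=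
  (forall x, is_derive sg x (m * sg x - d x ^ 2 / 2)) /\
  (forall x, is_derive d x (z x)) /\
  (forall x, is_derive z x (m * z x + d x / 2 * (Rabs (z x) - (m * sg x - d x ^ 2 / 2)))).

Section ReducedSystem.

Variables (m sp dl : R) (sg d z : R -> R).
Hypotheses (Hsys : reduced_system m sg d z)
  (Lsg0 : is_lim sg m_infty 0) (Ld0 : is_lim d m_infty 0)
  (Lsg1 : is_lim sg p_infty sp) (Ld1 : is_lim d p_infty dl).

Let dsg x := m * sg x - d x ^ 2 / 2.

Lemma dsg_lim_p_infty : is_lim dsg p_infty (m * sp - dl ^ 2 / 2).
Proof.
  apply (is_lim_minus' (fun x => m * sg x) (fun x => d x ^ 2 / 2)); [exact (is_lim_scal_l sg m _ _ Lsg1)|].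
  apply (is_lim_ext (fun x => / 2 * d x ^ 2)); [intros; simpl; field|].
  replace (dl ^ 2 / 2) with (/ 2 * dl ^ 2) by field.
  exact (is_lim_scal_l _ _ _ _ (is_lim_sq _ _ _ Ld1)).
Qed.

Lemma reduced_speed_relation : m * sp = dl ^ 2 / 2.
Proof.
  assert (E := is_lim_derive_p_infty sg dsg sp _ (proj1 Hsys) Lsg1 dsg_lim_p_infty); lra.
Qed.

Lemma reduced_flat_nonpos : dl = 0 -> sp <= 0.
Proof.
  intros Hdl; assert (Hrel : m * sp = 0).
  { rewrite reduced_speed_relation, Hdl; field. }
  destruct (Req_dec m 0) as [Hm|Hm]; [|apply Rmult_integral in Hrel; destruct Hrel; lra].
  assert (Hincr : forall x y, x <= y -> - sg x <= - sg y).
  { apply (derive_nonneg_incr _ (fun x => - dsg x)); [intros x; exact (is_derive_opp' _ _ _ (proj1 Hsys x))|].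
    intros x; unfold dsg; rewrite Hm; assert (0 <= d x ^ 2) by apply pow2_ge_0; lra. }
  assert (H0 := incr_lim_m_infty_le _ _ Hincr (is_lim_opp' _ _ _ Lsg0) 0).
  assert (H1 := incr_lim_p_infty_ge _ (- sp) Hincr (is_lim_opp' _ _ _ Lsg1) 0).
  lra.
Qed.

Hypotheses (Hm : 0 < m) (Hdl : dl < 0).

Let A x := dsg x + 2 * z x.
Let Q x := dsg x + z x.

Lemma dsg_derive (x : R) : is_derive dsg x (m * dsg x - d x * z x).
Proof.
  destruct Hsys as [Hsg [Hd _]].
  apply (is_derive_eq _ _ _ _ (is_derive_minus' _ _ _ _ _ (is_derive_scal' m _ _ _ (Hsg x))
    (is_derive_half_sq _ _ _ (Hd x)))).
  unfold dsg; field.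
Qed.

Lemma A_derive (x : R) : is_derive A x ((m - d x) * A x + d x * (z x + Rabs (z x))).
Proof.
  apply (is_derive_eq _ _ _ _ (is_derive_plus' _ _ _ _ _ (dsg_derive x)
    (is_derive_scal' 2 _ _ _ (proj2 (proj2 Hsys) x)))).
  unfold A, dsg; field.
Qed.

Lemma Q_derive (x : R) : is_derive Q x ((m - d x / 2) * Q x - d x / 2 * (z x - Rabs (z x))).
Proof.
  apply (is_derive_eq _ _ _ _ (is_derive_plus' _ _ _ _ _ (dsg_derive x) (proj2 (proj2 Hsys) x))).
  unfold Q; fold (dsg x); field.
Qed.

Lemma z_not_eventually_away (c X : R) : 0 < c -> ~ (forall x, X <= x -> c <= Rabs (z x)).
Proof. exact (derive_away_from_0_no_lim d z dl c X (proj1 (proj2 Hsys)) Ld1). Qed.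

Lemma dsg_eventually_small (e : R) : 0 < e -> exists M, forall x, M <= x -> Rabs (dsg x) < e.
Proof.
  intros He; assert (Hlim : is_lim dsg p_infty 0).
  { replace (Finite 0) with (Finite (m * sp - dl ^ 2 / 2)) by (f_equal; rewrite reduced_speed_relation; lra).
    exact dsg_lim_p_infty. }
  destruct (is_lim_p_infty_eps dsg 0 e Hlim He) as [M HM].
  exists M; intros x Hx; specialize (HM x Hx); now rewrite Rminus_0_r in HM.
Qed.

Section BeyondX.

Variable X : R.
Hypothesis HX : forall x, X <= x -> d x < dl / 2.

Lemma A_nonneg (x0 : R) : X <= x0 -> 0 <= A x0.
Proof.
  intros Hx0; destruct (Rle_lt_dec 0 (A x0)) as [ok|Hneg]; [exact ok|exfalso].
  assert (Hb : forall t, x0 <= t -> A t <= A x0).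
  { intros t Ht; enough (- A x0 <= - A t) by lra.
    apply (stays_above (fun y => - A y) (fun y => - ((m - d y) * A y + d y * (z y + Rabs (z y)))));
      [intros y; exact (is_derive_opp' _ _ _ (A_derive y))| |exact Ht].
    intros s Hs Hlev; specialize (HX s ltac:(lra)).
    assert (0 <= z s + Rabs (z s)) by (rewrite Rabs_add_self; apply Rmult_le_pos; [lra|apply Rmax_r]).
    assert ((m - d s) * A s < 0) by (apply Rmult_pos_neg; lra). nra. }
  destruct (dsg_eventually_small (- A x0 / 2)) as [M HM]; [lra|].
  apply (z_not_eventually_away (- A x0 / 4) (Rmax x0 M)); [lra|].
  intros x Hx; assert (Hx0x := Rle_trans _ _ _ (Rmax_l x0 M) Hx).
  specialize (Hb x Hx0x); specialize (HM x (Rle_trans _ _ _ (Rmax_r x0 M) Hx)); apply Rabs_def2 in HM.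
  assert (z x = (A x - dsg x) / 2) by (unfold A; field).
  rewrite Rabs_left; lra.
Qed.

Lemma Q_nonneg (x0 : R) : X <= x0 -> 0 <= Q x0.
Proof.
  intros Hx0; destruct (Rle_lt_dec 0 (Q x0)) as [ok|Hneg]; [exact ok|exfalso].
  assert (Hb : forall t, x0 <= t -> Q t <= Q x0).
  { intros t Ht; enough (- Q x0 <= - Q t) by lra.
    apply (stays_above (fun y => - Q y) (fun y => - ((m - d y / 2) * Q y - d y / 2 * (z y - Rabs (z y)))));
      [intros y; exact (is_derive_opp' _ _ _ (Q_derive y))| |exact Ht].
    intros s Hs Hlev; specialize (HX s ltac:(lra)).
    assert (z s - Rabs (z s) <= 0) by (assert (z s <= Rabs (z s)) by apply Rle_abs; lra).
    assert ((m - d s / 2) * Q s < 0) by (apply Rmult_pos_neg; lra). nra. }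
  destruct (dsg_eventually_small (- Q x0 / 2)) as [M HM]; [lra|].
  apply (z_not_eventually_away (- Q x0 / 2) (Rmax x0 M)); [lra|].
  intros x Hx; assert (Hx0x := Rle_trans _ _ _ (Rmax_l x0 M) Hx).
  specialize (Hb x Hx0x); specialize (HM x (Rle_trans _ _ _ (Rmax_r x0 M) Hx)); apply Rabs_def2 in HM.
  assert (z x = Q x - dsg x) by (unfold Q; ring).
  rewrite Rabs_left; lra.
Qed.

Lemma A_or_Q_nonpos : A X <= 0 \/ Q X <= 0.
Proof.
  destruct (Rle_lt_dec (A X) 0) as [HA|HA]; [now left|right].
  destruct (Rle_lt_dec (Q X) 0) as [HQ|HQ]; [exact HQ|exfalso].
  set (mu := Rmin (A X) (Q X)); assert (Hmu : 0 < mu) by now apply Rmin_glb_lt.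
  assert (Hz : forall t, z t = A t - Q t) by (intros; unfold A, Q; ring).
  assert (Hb : forall t, X <= t -> mu <= A t /\ mu <= Q t).
  { apply (stays_above_min A _ Q _ X mu A_derive Q_derive (Rmin_l _ _) (Rmin_r _ _)).
    - intros t Ht HQt HAt; specialize (HX t Ht); specialize (Hz t).
      replace (z t + Rabs (z t)) with 0 by (rewrite Rabs_left1; lra).
      rewrite HAt; apply Rplus_lt_le_0_compat; [apply Rmult_lt_0_compat|]; lra.
    - intros t Ht HAt HQt; specialize (HX t Ht); specialize (Hz t).
      replace (z t - Rabs (z t)) with 0 by (rewrite Rabs_right; lra).
      rewrite HQt; apply Rplus_lt_le_0_compat; [apply Rmult_lt_0_compat|]; lra. }
  destruct (dsg_eventually_small (mu / 2)) as [M HM]; [lra|].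
  apply (z_not_eventually_away (mu / 4) (Rmax X M)); [lra|].
  intros x Hx; destruct (Hb x (Rle_trans _ _ _ (Rmax_l X M) Hx)) as [HAx _].
  specialize (HM x (Rle_trans _ _ _ (Rmax_r X M) Hx)); apply Rabs_def2 in HM.
  assert (z x = (A x - dsg x) / 2) by (unfold A; field).
  rewrite Rabs_right; lra.
Qed.

End BeyondX.

Lemma d_bounded : exists D, forall x, Rabs (d x) <= D.
Proof.
  apply (bounded_of_lim d dl 0); [|exact Ld1|exact Ld0].
  intros x; exact (is_derive_continuity_pt _ _ _ (proj1 (proj2 Hsys) x)).
Qed.

Lemma A_vanishes (x0 : R) : A x0 = 0 -> z x0 <= 0 -> forall x, A x = 0.
Proof.
  intros HA0 Hz0 x; destruct d_bounded as [D HD].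
  refine (proj1 (gronwall_pos_part A _ z _ (fun x => 2 * (m - d x)) (fun x => 3 * d x)
    (fun x => 2 * m + 3 * d x) (2 * m + 5 * D) x0 A_derive (proj2 (proj2 Hsys)) _ _ _ HA0 Hz0 x)).
  - intros y; set (w := Rmax (z y) 0).
    replace (m * sg y - d y ^ 2 / 2) with (A y - 2 * z y) by (unfold A, dsg; ring).
    rewrite Rabs_add_self; fold w.
    transitivity (2 * (m - d y) * A y ^ 2 + 3 * d y * A y * w + (2 * m + 2 * d y) * (z y * w)
      + d y * (Rabs (z y) * w)); [field|].
    unfold w; rewrite Rmax0_mul, Rabs_Rmax0_mul; ring.
  - intros y; specialize (HD y); unfold Rabs in *.
    destruct (Rcase_abs (2 * (m - d y))), (Rcase_abs (3 * d y)), (Rcase_abs (d y)); lra.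
  - intros y; specialize (HD y); unfold Rabs in *.
    destruct (Rcase_abs (2 * m + 3 * d y)), (Rcase_abs (3 * d y)), (Rcase_abs (d y)); lra.
Qed.

Lemma Q_vanishes (x0 : R) : Q x0 = 0 -> 0 <= z x0 -> forall x, 0 <= z x.
Proof.
  intros HQ0 Hz0 x; destruct d_bounded as [D HD].
  enough (- z x <= 0) by lra.
  refine (proj2 (gronwall_pos_part Q _ (fun y => - z y) _ (fun x => 2 * m - d x) (fun x => 3 * d x)
    (fun _ => 2 * m) (2 * m + 3 * D) x0 Q_derive
    (fun y => is_derive_opp' _ _ _ (proj2 (proj2 Hsys) y)) _ _ _ HQ0 ltac:(lra) x)).
  - intros y; set (w := Rmax (- z y) 0).
    replace (m * sg y - d y ^ 2 / 2) with (Q y - z y) by (unfold Q, dsg; ring).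
    replace (z y - Rabs (z y)) with (- (- z y + Rabs (- z y))) by (rewrite Rabs_Ropp; ring).
    rewrite Rabs_add_self; fold w.
    transitivity ((2 * m - d y) * Q y ^ 2 + 3 * d y * Q y * w + (2 * m + d y) * (- z y * w)
      - d y * (Rabs (- z y) * w)); [rewrite Rabs_Ropp; field|].
    unfold w; rewrite Rmax0_mul, Rabs_Rmax0_mul; ring.
  - intros y; specialize (HD y); unfold Rabs in *.
    destruct (Rcase_abs (2 * m - d y)), (Rcase_abs (3 * d y)), (Rcase_abs (d y)); lra.
  - intros y; specialize (HD y); unfold Rabs in *.
    destruct (Rcase_abs (2 * m)), (Rcase_abs (3 * d y)), (Rcase_abs (d y)); lra.
Qed.

(* The barrier argument: beyond a point where [d < dl / 2], neither [A] nor [Q] can become negative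
   (otherwise [z] would stay away from 0), nor can both stay positive; the case [Q = 0] is impossible
   since it would make [d] nondecreasing. *)
Theorem reduced_front : dl = -4 * m /\ (forall x, sg x = -2 * d x) /\ (forall x, z x = d x * (m + d x / 4)).
Proof.
  destruct (is_lim_p_infty_eps d dl (- dl / 2) Ld1) as [X HX]; [lra|].
  assert (HX' : forall x, X <= x -> d x < dl / 2).
  { intros x Hx; specialize (HX x Hx); apply Rabs_def2 in HX; lra. }
  assert (HA := A_nonneg X HX' X (Rle_refl X)); assert (HQ := Q_nonneg X HX' X (Rle_refl X)).
  assert (HAQ := A_or_Q_nonpos X HX'); assert (Hz : z X = A X - Q X) by (unfold A, Q; ring).
  assert (HA0 : forall x, A x = 0).
  { destruct (Rle_lt_dec (z X) 0) as [Hn|Hp]; [apply (A_vanishes X); lra|exfalso].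
    assert (Hincr := derive_nonneg_incr d z (proj1 (proj2 Hsys)) (Q_vanishes X ltac:(lra) ltac:(lra))).
    assert (H0 := incr_lim_m_infty_le d 0 Hincr Ld0 X).
    assert (H1 := incr_lim_p_infty_ge d dl Hincr Ld1 X); lra. }
  assert (Hsgd : forall x, sg x = -2 * d x).
  { intros x; enough (sg x + 2 * d x = 0) by lra.
    apply (is_lim_const_eq _ m_infty).
    apply (is_lim_ext (fun y => sg y + 2 * d y)).
    - intros y; apply (derive0_const (fun y => sg y + 2 * d y)); intros t.
      apply (is_derive_eq _ _ _ _ (is_derive_plus' _ _ _ _ _ (proj1 Hsys t)
        (is_derive_scal' 2 _ _ _ (proj1 (proj2 Hsys) t)))).
      specialize (HA0 t); unfold A, dsg in HA0; lra.
    - replace (Finite 0) with (Finite (0 + 2 * 0)) by (f_equal; ring).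
      exact (is_lim_plus' _ _ _ _ _ Lsg0 (is_lim_scal_l _ 2 _ _ Ld0)). }
  assert (Hzd : forall x, z x = d x * (m + d x / 4)).
  { intros x; specialize (HA0 x); unfold A, dsg in HA0; rewrite Hsgd in HA0; lra. }
  split; [|split; assumption].
  assert (Hlim : is_lim z p_infty (dl * (m + dl / 4))).
  { apply (is_lim_ext (fun x => d x * (m + d x / 4))); [intros x; now rewrite Hzd|].
    apply (is_lim_mult _ _ _ dl (m + dl / 4) Ld1); [|exact I].
    apply (is_lim_plus' (fun _ => m) (fun x => d x / 4)); [apply is_lim_const|].
    apply (is_lim_ext (fun x => / 4 * d x)); [intros; simpl; field|].
    replace (dl / 4) with (/ 4 * dl) by field; exact (is_lim_scal_l _ _ _ _ Ld1). }
  assert (E := is_lim_derive_p_infty d z dl _ (proj1 (proj2 Hsys)) Ld1 Hlim).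
  apply Rmult_integral in E; lra.
Qed.

End ReducedSystem.

Definition profile_reaction (g1 g2 G1 G2 : R -> R) (x : R) : R :=
  if Rle_dec ((G2 x - G1 x) / 2) 0 then - ((G2 x - G1 x) / 2) * g1 x
  else - ((G2 x - G1 x) / 2) * g2 x.

(* The TFE equations for [c_i (t, y) = g_i (y - v t)], with [G_i = g_i'] and [H_i = g_i'']. *)
Definition wave_ode (v : R) (g1 g2 G1 G2 H1 H2 : R -> R) : Prop := forall x,
  - v * G1 x + ((G2 x - G1 x) / 2 * g1 x + (g2 x - g1 x) / 2 * G1 x) - H1 x
    = - profile_reaction g1 g2 G1 G2 x /\
  - v * G2 x - ((G2 x - G1 x) / 2 * g2 x + (g2 x - g1 x) / 2 * G2 x) - H2 x
    = profile_reaction g1 g2 G1 G2 x.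

Definition wave_profile (v : R) (g1 g2 : R -> R) (gm gp : R * R) : Prop :=
  exists G1 G2 H1 H2 : R -> R,
    (forall x, is_derive g1 x (G1 x)) /\ (forall x, is_derive g2 x (G2 x)) /\
    (forall x, is_derive G1 x (H1 x)) /\ (forall x, is_derive G2 x (H2 x)) /\
    wave_ode v g1 g2 G1 G2 H1 H2 /\
    is_lim g1 m_infty (fst gm) /\ is_lim g2 m_infty (snd gm) /\
    is_lim g1 p_infty (fst gp) /\ is_lim g2 p_infty (snd gp).

Lemma is_derive_shift (g G : R -> R) (c y : R) : (forall x, is_derive g x (G x)) ->
  is_derive (fun x => g (x - c)) y (G (y - c)).
Proof.
  intros H; apply (is_derive_eq _ _ _ _ (is_derive_comp' g (fun x => x - c) y _ _ (H (y - c))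
    (is_derive_minus' _ _ _ _ _ (is_derive_id' y) (is_derive_const' c y)))); ring.
Qed.

Section TravelingWave.

Variables (v : R) (g1 g2 G1 G2 H1 H2 : R -> R).
Hypotheses (D1 : forall x, is_derive g1 x (G1 x)) (D2 : forall x, is_derive g2 x (G2 x))
  (E1 : forall x, is_derive G1 x (H1 x)) (E2 : forall x, is_derive G2 x (H2 x)).

Let c1 : field := fun t y => g1 (y - v * t).
Let c2 : field := fun t y => g2 (y - v * t).

Lemma is_derive_wave_t (g G : R -> R) (t y : R) : (forall x, is_derive g x (G x)) ->
  is_derive (fun s => g (y - v * s)) t (- v * G (y - v * t)).
Proof.
  intros HD; apply (is_derive_eq _ _ _ _ (is_derive_comp' g (fun s => y - v * s) t _ _ (HD (y - v * t))
    (is_derive_minus' _ _ _ _ _ (is_derive_const' y t) (is_derive_scal' v _ _ _ (is_derive_id' t))))).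
  ring.
Qed.

Lemma d_t_wave (g G : R -> R) (t y : R) : (forall x, is_derive g x (G x)) ->
  d_t (fun t y => g (y - v * t)) t y = - v * G (y - v * t).
Proof. intros HD; exact (is_derive_unique _ _ _ (is_derive_wave_t g G t y HD)). Qed.

Lemma d_yy_wave (g G H : R -> R) (t y : R) : (forall x, is_derive g x (G x)) ->
  (forall x, is_derive G x (H x)) -> d_yy (fun t y => g (y - v * t)) t y = H (y - v * t).
Proof.
  intros HD HE; unfold d_yy; simpl.
  rewrite (Derive_ext _ (fun z => G (z - v * t))); [now apply is_derive_unique, is_derive_shift|].
  intros z; now apply is_derive_unique, is_derive_shift.
Qed.

Lemma is_derive_u1_wave (t y : R) :
  is_derive (fun z => u1 c1 c2 t z) y ((G2 (y - v * t) - G1 (y - v * t)) / 2).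
Proof.
  unfold u1, c1, c2; apply (is_derive_ext (fun z => / 2 * (g2 (z - v * t) - g1 (z - v * t))));
    [intros; simpl; field|].
  apply (is_derive_eq _ _ _ _ (is_derive_scal' _ _ _ _
    (is_derive_minus' _ _ _ _ _ (is_derive_shift _ _ _ _ D2) (is_derive_shift _ _ _ _ D1)))).
  field.
Qed.

Lemma d_y_u1_wave (t y : R) : d_y (u1 c1 c2) t y = (G2 (y - v * t) - G1 (y - v * t)) / 2.
Proof. exact (is_derive_unique _ _ _ (is_derive_u1_wave t y)). Qed.

Lemma d_y_flux1_wave (t y : R) : d_y (fun t z => u1 c1 c2 t z * c1 t z) t y =
  (G2 (y - v * t) - G1 (y - v * t)) / 2 * g1 (y - v * t)
  + (g2 (y - v * t) - g1 (y - v * t)) / 2 * G1 (y - v * t).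
Proof.
  apply is_derive_unique.
  exact (is_derive_mult' _ _ _ _ _ (is_derive_u1_wave t y) (is_derive_shift _ _ _ _ D1)).
Qed.

Lemma d_y_flux2_wave (t y : R) : d_y (fun t z => u2 c1 c2 t z * c2 t z) t y =
  - ((G2 (y - v * t) - G1 (y - v * t)) / 2 * g2 (y - v * t)
     + (g2 (y - v * t) - g1 (y - v * t)) / 2 * G2 (y - v * t)).
Proof.
  apply is_derive_unique; unfold u2.
  apply (is_derive_eq _ _ _ _ (is_derive_mult' _ _ _ _ _
    (is_derive_opp' _ _ _ (is_derive_u1_wave t y)) (is_derive_shift _ _ _ _ D2))).
  unfold u1, c1, c2; ring.
Qed.

Lemma reaction_wave (t y : R) : reaction c1 c2 t y = profile_reaction g1 g2 G1 G2 (y - v * t).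
Proof. unfold reaction; now rewrite d_y_u1_wave. Qed.

Lemma classical_regular_wave (g G H : R -> R) : (forall x, is_derive g x (G x)) ->
  (forall x, is_derive G x (H x)) -> classical_regular (fun t y => g (y - v * t)).
Proof.
  intros HD HE t _; split; [|split]; intros y.
  - eexists; exact (is_derive_wave_t g G t y HD).
  - eexists; now apply is_derive_shift.
  - apply (ex_derive_ext (fun z => G (z - v * t))); [|eexists; now apply is_derive_shift].
    intros z; symmetry; now apply is_derive_unique, is_derive_shift.
Qed.

Lemma TFE_solution_wave_iff : TFE_solution c1 c2 <-> wave_ode v g1 g2 G1 G2 H1 H2.
Proof.
  split.
  - intros [_ [_ HT]] x; destruct (HT 0 x (Rle_refl 0)) as [T1 T2]; unfold c1, c2 in T1, T2.
    rewrite (d_t_wave g1 G1), (d_yy_wave g1 G1 H1) in T1 by assumption.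
    rewrite (d_t_wave g2 G2), (d_yy_wave g2 G2 H2) in T2 by assumption.
    fold c1 c2 in T1, T2; rewrite d_y_flux1_wave, reaction_wave in T1; rewrite d_y_flux2_wave, reaction_wave in T2.
    replace (x - v * 0) with x in * by ring; split; lra.
  - intros HO; split; [now apply (classical_regular_wave g1 G1 H1)|].
    split; [now apply (classical_regular_wave g2 G2 H2)|].
    intros t y _; unfold c1, c2.
    rewrite (d_t_wave g1 G1), (d_t_wave g2 G2), (d_yy_wave g1 G1 H1), (d_yy_wave g2 G2 H2) by assumption.
    fold c1 c2; rewrite d_y_flux1_wave, d_y_flux2_wave, reaction_wave.
    destruct (HO (y - v * t)) as [O1 O2]; split; lra.
Qed.

End TravelingWave.

Lemma stationary_const (a b : R) : stationary (a, b).
Proof.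
  apply (proj2 (TFE_solution_wave_iff 0 (fun _ => a) (fun _ => b) (fun _ => 0) (fun _ => 0)
    (fun _ => 0) (fun _ => 0) (is_derive_const' a) (is_derive_const' b)
    (is_derive_const' 0) (is_derive_const' 0))).
  intros x; unfold profile_reaction; destruct (Rle_dec _ 0); split; field.
Qed.

Lemma wave_profile_of_traveling_wave (v : R) (g1 g2 : R -> R) (gm gp : R * R) :
  traveling_wave g1 g2 v gm gp -> wave_profile v g1 g2 gm gp.
Proof.
  intros [_ [_ [L1 [L2 [L3 [L4 HT]]]]]].
  assert (Hreg : forall g : R -> R, classical_regular (fun t y => g (y - v * t)) ->
    (forall x, ex_derive g x) /\ forall x, ex_derive (Derive g) x).
  { intros g Hg; destruct (Hg 0 (Rle_refl 0)) as [_ [Hg1 Hg2]].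
    assert (Ext : forall y, g (y - v * 0) = g y) by (intros; f_equal; ring).
    split; intros x.
    - exact (ex_derive_ext _ _ x Ext (Hg1 x)).
    - apply (ex_derive_ext (Derive (fun y => g (y - v * 0)))); [|exact (Hg2 x)].
      intros y; now apply Derive_ext. }
  destruct (Hreg g1 (proj1 HT)) as [X1 Y1]; destruct (Hreg g2 (proj1 (proj2 HT))) as [X2 Y2].
  exists (Derive g1), (Derive g2), (Derive (Derive g1)), (Derive (Derive g2)).
  assert (D1 : forall x, is_derive g1 x (Derive g1 x)) by (intros; apply Derive_correct, X1).
  assert (D2 : forall x, is_derive g2 x (Derive g2 x)) by (intros; apply Derive_correct, X2).
  assert (E1 : forall x, is_derive (Derive g1) x (Derive (Derive g1) x)) by (intros; apply Derive_correct, Y1).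
  assert (E2 : forall x, is_derive (Derive g2) x (Derive (Derive g2) x)) by (intros; apply Derive_correct, Y2).
  do 4 (split; [assumption|]); split; [exact (proj1 (TFE_solution_wave_iff v g1 g2 _ _ _ _ D1 D2 E1 E2) HT)|].
  now repeat split.
Qed.

Lemma traveling_wave_of_profile (v : R) (g1 g2 : R -> R) (gm gp : R * R) :
  wave_profile v g1 g2 gm gp -> traveling_wave g1 g2 v gm gp.
Proof.
  intros [G1 [G2 [H1 [H2 [D1 [D2 [E1 [E2 [HO [L1 [L2 [L3 L4]]]]]]]]]]]].
  assert (Hc : forall g G : R -> R, (forall x, is_derive g x (G x)) -> forall x, continuous g x).
  { intros g G HD x; apply (ex_derive_continuous (K := R_AbsRing) (V := R_NormedModule)).
    eexists; apply HD. }
  split; [exact (Hc _ _ D1)|split; [exact (Hc _ _ D2)|]].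
  do 4 (split; [assumption|]).
  exact (proj2 (TFE_solution_wave_iff v g1 g2 G1 G2 H1 H2 D1 D2 E1 E2) HO).
Qed.

Lemma profile_reaction_swap (g1 g2 G1 G2 : R -> R) (x : R) :
  profile_reaction g2 g1 G2 G1 x = - profile_reaction g1 g2 G1 G2 x.
Proof.
  unfold profile_reaction; destruct (Rle_dec ((G1 x - G2 x) / 2) 0), (Rle_dec ((G2 x - G1 x) / 2) 0).
  - replace (G1 x) with (G2 x) by lra; field.
  - field.
  - field.
  - lra.
Qed.

Lemma wave_ode_swap (v : R) (g1 g2 G1 G2 H1 H2 : R -> R) :
  wave_ode v g1 g2 G1 G2 H1 H2 -> wave_ode v g2 g1 G2 G1 H2 H1.
Proof. intros HO x; rewrite profile_reaction_swap; destruct (HO x); split; lra. Qed.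

Lemma wave_profile_swap (v a1 a2 b1 b2 : R) (g1 g2 : R -> R) :
  wave_profile v g1 g2 (a1, a2) (b1, b2) -> wave_profile v g2 g1 (a2, a1) (b2, b1).
Proof.
  intros [G1 [G2 [H1 [H2 [D1 [D2 [E1 [E2 [HO [L1 [L2 [L3 L4]]]]]]]]]]]].
  exists G2, G1, H2, H1; do 4 (split; [assumption|]); split; [now apply wave_ode_swap|].
  now repeat split.
Qed.

Definition mirror (g : R -> R) (x : R) : R := - g (- x).

Lemma is_derive_reflect (g G : R -> R) (x : R) : (forall y, is_derive g y (G y)) ->
  is_derive (fun y => g (- y)) x (- G (- x)).
Proof.
  intros H; apply (is_derive_eq _ _ _ _ (is_derive_comp' g Ropp x _ _ (H (- x))
    (is_derive_opp' _ _ _ (is_derive_id' x)))); ring.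
Qed.

Lemma is_derive_mirror (g G : R -> R) (x : R) : (forall y, is_derive g y (G y)) ->
  is_derive (mirror g) x (G (- x)).
Proof.
  intros H; apply (is_derive_eq _ _ _ _ (is_derive_opp' _ _ _ (is_derive_reflect g G x H))); ring.
Qed.

Lemma profile_reaction_mirror (g1 g2 G1 G2 : R -> R) (x : R) :
  profile_reaction (mirror g2) (mirror g1) (fun y => G2 (- y)) (fun y => G1 (- y)) x
  = profile_reaction g1 g2 G1 G2 (- x).
Proof.
  unfold profile_reaction, mirror.
  destruct (Rle_dec ((G1 (- x) - G2 (- x)) / 2) 0), (Rle_dec ((G2 (- x) - G1 (- x)) / 2) 0).
  - replace (G1 (- x)) with (G2 (- x)) by lra; field.
  - field.
  - field.
  - lra.
Qed.

Lemma wave_ode_mirror (v : R) (g1 g2 G1 G2 H1 H2 : R -> R) :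
  wave_ode v g1 g2 G1 G2 H1 H2 ->
  wave_ode (- v) (mirror g2) (mirror g1) (fun y => G2 (- y)) (fun y => G1 (- y)) (mirror H2) (mirror H1).
Proof.
  intros HO x; rewrite profile_reaction_mirror; destruct (HO (- x)) as [O1 O2]; unfold mirror; split; lra.
Qed.

Lemma wave_profile_mirror (v a1 a2 b1 b2 : R) (g1 g2 : R -> R) :
  wave_profile v g1 g2 (a1, a2) (b1, b2) ->
  wave_profile (- v) (mirror g2) (mirror g1) (- b2, - b1) (- a2, - a1).
Proof.
  intros [G1 [G2 [H1 [H2 [D1 [D2 [E1 [E2 [HO [L1 [L2 [L3 L4]]]]]]]]]]]]; simpl in *.
  exists (fun y => G2 (- y)), (fun y => G1 (- y)), (mirror H2), (mirror H1).
  split; [intros; now apply is_derive_mirror|]; split; [intros; now apply is_derive_mirror|].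
  split; [intros; exact (is_derive_reflect _ _ _ E2)|]; split; [intros; exact (is_derive_reflect _ _ _ E1)|].
  split; [now apply wave_ode_mirror|].
  split; [|split; [|split]]; apply is_lim_opp'; now apply is_lim_reflect_m_infty || apply is_lim_reflect_p_infty.
Qed.

Definition logistic (m x : R) : R := / (1 + exp (- (m * x))).

Lemma logistic_bounds (m x : R) : 0 < logistic m x < 1.
Proof.
  unfold logistic; assert (0 < exp (- (m * x))) by apply exp_pos; split.
  - apply Rinv_0_lt_compat; lra.
  - rewrite <- Rinv_1; apply Rinv_lt_contravar; lra.
Qed.

Lemma logistic_0 (m : R) : logistic m 0 = / 2.
Proof. unfold logistic; rewrite Rmult_0_r, Ropp_0, exp_0; field. Qed.

Lemma logistic_opp (m x : R) : logistic m (- x) = 1 - logistic m x.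
Proof.
  unfold logistic; replace (- (m * - x)) with (m * x) by ring; rewrite exp_Ropp.
  assert (0 < exp (m * x)) by apply exp_pos; field; lra.
Qed.

Lemma is_derive_logistic (m x : R) : is_derive (logistic m) x (m * logistic m x * (1 - logistic m x)).
Proof.
  unfold logistic; assert (0 < exp (- (m * x))) by apply exp_pos.
  auto_derive; [lra|field; lra].
Qed.

Lemma logistic_lim_p_infty (m : R) : 0 < m -> is_lim (logistic m) p_infty 1.
Proof.
  intros Hm; apply eps_is_lim_p_infty; intros e He; exists (- ln e / m + 1); intros x Hx.
  assert (HE : 0 < exp (- (m * x))) by apply exp_pos.
  assert (exp (- (m * x)) < e).
  { rewrite <- (exp_ln e He); apply exp_increasing.
    enough (- ln e < m * x) by lra.
    replace (- ln e) with (m * (- ln e / m)) by (field; lra); apply Rmult_lt_compat_l; lra. }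
  unfold logistic; replace (/ (1 + exp (- (m * x))) - 1) with (- (exp (- (m * x)) / (1 + exp (- (m * x)))))
    by (field; lra).
  set (E := exp (- (m * x))) in *.
  assert (Hfrac : 0 <= E / (1 + E) <= E).
  { split; [unfold Rdiv; apply Rmult_le_pos; [lra|left; apply Rinv_0_lt_compat; lra]|].
    apply (Rmult_le_reg_r (1 + E)); [lra|]; unfold Rdiv; rewrite Rmult_assoc, Rinv_l by lra; nra. }
  rewrite Rabs_Ropp, Rabs_right; lra.
Qed.

Lemma logistic_lim_m_infty (m : R) : 0 < m -> is_lim (logistic m) m_infty 0.
Proof.
  intros Hm; apply (is_lim_ext (fun x => 1 - logistic m (- x))); [intros x; rewrite logistic_opp; ring|].
  replace (Finite 0) with (Finite (1 - 1)) by (f_equal; ring).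
  exact (is_lim_minus' _ _ _ _ _ (is_lim_const 1 m_infty)
    (is_lim_reflect_m_infty _ _ (logistic_lim_p_infty m Hm))).
Qed.

Lemma logistic_unique (m : R) (d : R -> R) : 0 < m ->
  (forall x, is_derive d x (d x * (m + d x / 4))) -> is_lim d m_infty 0 -> is_lim d p_infty (-4 * m) ->
  exists c, forall x, d x = -4 * m * logistic m (x + c).
Proof.
  intros Hm HD L0 L1.
  assert (Hcont : forall x, continuity_pt d x) by (intros x; exact (is_derive_continuity_pt _ _ _ (HD x))).
  destruct (is_lim_m_infty_eps d 0 m L0 Hm) as [Ma HMa].
  destruct (is_lim_p_infty_eps d (-4 * m) m L1 Hm) as [Mb HMb].
  set (xa := Rmin Ma Mb - 1); set (xb := Rmax Ma Mb + 1).
  assert (Ha := HMa xa ltac:(unfold xa; assert (Rmin Ma Mb <= Ma) by apply Rmin_l; lra)).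
  assert (Hb := HMb xb ltac:(unfold xb; assert (Mb <= Rmax Ma Mb) by apply Rmax_r; lra)).
  apply Rabs_def2 in Ha; apply Rabs_def2 in Hb.
  destruct (IVT (fun x => - (d x + 2 * m)) xa xb) as [x0 [_ Hx0]].
  { intros x; apply continuity_pt_opp, continuity_pt_plus; [apply Hcont|apply continuity_pt_const; now intros ? ?]. }
  { unfold xa, xb; assert (Rmin Ma Mb <= Rmax Ma Mb) by (apply Rle_trans with Ma; [apply Rmin_l|apply Rmax_l]); lra. }
  { lra. }
  { lra. }
  exists (- x0).
  (* [d] and the logistic front through [(x0, -2 m)] solve the same Lipschitz ODE. *)
  set (P x := -4 * m * logistic m (x + - x0)).
  assert (HP : forall x, is_derive P x (P x * (m + P x / 4))).
  { intros x; unfold P.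
    apply (is_derive_eq _ _ _ _ (is_derive_scal' (-4 * m) _ _ _
      (is_derive_comp' (logistic m) (fun y => y + - x0) x _ _ (is_derive_logistic m _)
        (is_derive_plus' _ _ _ _ _ (is_derive_id' x) (is_derive_const' (- x0) x))))).
    field. }
  destruct (bounded_of_lim d (-4 * m) 0 Hcont L1 L0) as [D HDb].
  set (V x := (d x - P x) ^ 2).
  assert (HV : forall x, is_derive V x (V x * (2 * m + (d x + P x) / 2))).
  { intros x; apply (is_derive_eq _ _ _ _ (is_derive_sq _ _ _ (is_derive_minus' _ _ _ _ _ (HD x) (HP x)))).
    unfold V; field. }
  assert (HV0 : forall x, V x = 0).
  { apply (gronwall V _ (2 * m + (D + 4 * m) / 2) x0 HV); [intros; apply pow2_ge_0| |].
    - intros x; rewrite Rabs_mult, Rmult_comm, (Rabs_right (V x)) by (apply Rle_ge, pow2_ge_0).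
      apply Rmult_le_compat_r; [apply pow2_ge_0|].
      specialize (HDb x); assert (HL := logistic_bounds m (x + - x0)); fold (P x) in HL.
      assert (-4 * m < P x < 0) by (unfold P; nra).
      apply Rabs_le_between in HDb; apply Rabs_le_between; lra.
    - unfold V, P; rewrite Rplus_opp_r, logistic_0; simpl in Hx0; replace (d x0) with (-2 * m) by lra; field. }
  intros x; specialize (HV0 x); unfold V, P in HV0; apply pow2_eq_0 in HV0; lra.
Qed.

Definition front1 (v x : R) : R := -1 - 6 * v * logistic (- v) x.
Definition front2 (v x : R) : R := -1 - 2 * v * logistic (- v) x.

Lemma front_wave_profile (v : R) : v < 0 ->
  wave_profile v (front1 v) (front2 v) (-1, -1) (-1 - 6 * v, -1 - 2 * v).
Proof.
  intros Hv; set (L := logistic (- v)).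
  set (dL x := - v * L x * (1 - L x)); set (ddL x := - v * (1 - 2 * L x) * dL x).
  assert (HL : forall x, is_derive L x (dL x)) by (intros x; apply is_derive_logistic).
  assert (HdL : forall x, is_derive dL x (ddL x)).
  { intros x; unfold dL, ddL.
    apply (is_derive_ext (fun y => - v * (L y * (1 - L y)))); [intros; simpl; ring|].
    apply (is_derive_eq _ _ _ _ (is_derive_scal' _ _ _ _ (is_derive_mult' _ _ _ _ _ (HL x)
      (is_derive_minus' _ _ _ _ _ (is_derive_const' 1 x) (HL x))))).
    unfold dL; ring. }
  assert (Hfront : forall k x, is_derive (fun y => -1 - k * v * L y) x (- k * v * dL x)).
  { intros k x; apply (is_derive_eq _ _ _ _ (is_derive_minus' _ _ _ _ _ (is_derive_const' (-1) x)
      (is_derive_scal' (k * v) _ _ _ (HL x)))); ring. }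
  assert (Hlim : forall k, is_lim (fun y => -1 - k * v * L y) m_infty (-1)
                        /\ is_lim (fun y => -1 - k * v * L y) p_infty (-1 - k * v)).
  { intros k; split.
    - replace (Finite (-1)) with (Finite (-1 - k * v * 0)) by (f_equal; ring).
      exact (is_lim_minus' _ _ _ _ _ (is_lim_const _ _) (is_lim_scal_l _ _ _ _ (logistic_lim_m_infty (- v) ltac:(lra)))).
    - replace (Finite (-1 - k * v)) with (Finite (-1 - k * v * 1)) by (f_equal; ring).
      exact (is_lim_minus' _ _ _ _ _ (is_lim_const _ _) (is_lim_scal_l _ _ _ _ (logistic_lim_p_infty (- v) ltac:(lra)))). }
  exists (fun x => - 6 * v * dL x), (fun x => - 2 * v * dL x), (fun x => - 6 * v * ddL x), (fun x => - 2 * v * ddL x).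
  split; [exact (Hfront 6)|]; split; [exact (Hfront 2)|].
  split; [intros x; exact (is_derive_scal' _ _ _ _ (HdL x))|].
  split; [intros x; exact (is_derive_scal' _ _ _ _ (HdL x))|].
  split; [|destruct (Hlim 6), (Hlim 2); now repeat split].
  intros x; assert (HLx := logistic_bounds (- v) x); fold (L x) in HLx.
  unfold profile_reaction, front1, front2, ddL, dL; fold L.
  destruct (Rle_dec _ 0) as [_|Hpos]; [split; field|exfalso; apply Hpos].
  assert (0 < L x * (1 - L x)) by (apply Rmult_lt_0_compat; lra).
  enough (0 < v * v * (L x * (1 - L x))) by lra.
  apply Rmult_lt_0_compat; [nra|assumption].
Qed.

Section FirstWave.

Variables (v a b : R) (g1 g2 : R -> R).
Hypothesis Hw : wave_profile v g1 g2 (-1, -1) (a, b).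

Let sg x := g1 x + g2 x + 2.
Let d x := g2 x - g1 x.

Lemma first_wave_limits : is_lim sg m_infty 0 /\ is_lim d m_infty 0 /\
  is_lim sg p_infty (a + b + 2) /\ is_lim d p_infty (b - a).
Proof.
  destruct Hw as [G1 [G2 [H1 [H2 [_ [_ [_ [_ [_ [L1 [L2 [L3 L4]]]]]]]]]]]]; simpl in *.
  assert (Hsg : forall x (l1 l2 : R), is_lim g1 x l1 -> is_lim g2 x l2 -> is_lim sg x (l1 + l2 + 2)).
  { intros x l1 l2 H1' H2'; exact (is_lim_plus' _ _ _ _ _ (is_lim_plus' _ _ _ _ _ H1' H2') (is_lim_const 2 x)). }
  split; [|split; [|split]].
  - replace (Finite 0) with (Finite (-1 + -1 + 2)) by (f_equal; ring); now apply Hsg.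
  - replace (Finite 0) with (Finite (-1 - -1)) by (f_equal; ring); exact (is_lim_minus' _ _ _ _ _ L2 L1).
  - now apply Hsg.
  - exact (is_lim_minus' _ _ _ _ _ L4 L3).
Qed.

(* Adding the two equations shows that [- v s - d^2/2 - s'] is constant for [s = g1 + g2];
   its value at [-oo] is [2 v]. *)
Lemma first_wave_reduced : exists z, reduced_system (- v) sg d z.
Proof.
  destruct Hw as [G1 [G2 [H1 [H2 [D1 [D2 [E1 [E2 [HO [L1 [L2 _]]]]]]]]]]]; simpl in *.
  set (K x := - v * (g1 x + g2 x) - (g2 x - g1 x) ^ 2 / 2 - (G1 x + G2 x)).
  assert (HK : forall x y, K x = K y).
  { apply derive0_const; intros x; destruct (HO x) as [O1 O2].
    apply (is_derive_eq _ _ _ _ (is_derive_minus' _ _ _ _ _ (is_derive_minus' _ _ _ _ _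
      (is_derive_scal' (- v) _ _ _ (is_derive_plus' _ _ _ _ _ (D1 x) (D2 x)))
      (is_derive_half_sq _ _ _ (is_derive_minus' _ _ _ _ _ (D2 x) (D1 x))))
      (is_derive_plus' _ _ _ _ _ (E1 x) (E2 x)))).
    lra. }
  assert (HG : forall x, G1 x + G2 x = - v * sg x - d x ^ 2 / 2).
  { intros x; enough (K x = 2 * v) by (unfold K, sg, d in *; lra).
    destruct first_wave_limits as [Lsg [Ld _]].
    enough (2 * v - K x = 0) by lra.
    apply (is_lim_derive_m_infty (fun y => g1 y + g2 y) (fun y => G1 y + G2 y) (-1 + -1));
      [intros y; exact (is_derive_plus' _ _ _ _ _ (D1 y) (D2 y))|exact (is_lim_plus' _ _ _ _ _ L1 L2)|].
    apply (is_lim_ext (fun y => - v * sg y + 2 * v - / 2 * d y ^ 2 - K x)).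
    { intros y; rewrite (HK x y); unfold K, sg, d; field. }
    replace (Finite (2 * v - K x)) with (Finite (- v * 0 + 2 * v - / 2 * 0 ^ 2 - K x)) by (f_equal; field).
    apply (is_lim_minus' _ (fun _ => K x)); [|apply is_lim_const].
    apply (is_lim_minus' _ (fun y => / 2 * d y ^ 2)).
    - exact (is_lim_plus' _ _ _ _ _ (is_lim_scal_l _ _ _ _ Lsg) (is_lim_const _ _)).
    - exact (is_lim_scal_l _ _ _ _ (is_lim_sq _ _ _ Ld)). }
  exists (fun x => G2 x - G1 x); split; [|split]; intros x.
  - apply (is_derive_eq _ _ _ _ (is_derive_plus' _ _ _ _ _ (is_derive_plus' _ _ _ _ _ (D1 x) (D2 x))
      (is_derive_const' 2 x))).
    rewrite <- HG; ring.
  - exact (is_derive_minus' _ _ _ _ _ (D2 x) (D1 x)).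
  - apply (is_derive_eq _ _ _ _ (is_derive_minus' _ _ _ _ _ (E2 x) (E1 x))).
    rewrite <- HG; unfold d; destruct (HO x) as [O1 O2]; unfold profile_reaction in O1, O2.
    destruct (Rle_dec ((G2 x - G1 x) / 2) 0).
    + rewrite Rabs_left1 by lra; lra.
    + rewrite Rabs_right by lra; lra.
Qed.

Lemma first_wave_speed_relation : - v * (a + b + 2) = (b - a) ^ 2 / 2.
Proof.
  destruct first_wave_reduced as [z Hz]; destruct first_wave_limits as [L1 [L2 [L3 L4]]].
  exact (reduced_speed_relation _ _ _ _ _ _ Hz L3 L4).
Qed.

Lemma first_wave_flat : a = b -> a <= -1.
Proof.
  intros Hab; destruct first_wave_reduced as [z Hz]; destruct first_wave_limits as [L1 [L2 [L3 L4]]].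
  assert (H := reduced_flat_nonpos _ _ _ _ _ _ Hz L1 L3 L4 ltac:(lra)); lra.
Qed.

Lemma first_wave_classification : v < 0 -> b < a ->
  a = -1 - 6 * v /\ b = -1 - 2 * v /\ same_up_to_translation (front1 v) (front2 v) g1 g2.
Proof.
  intros Hv Hba; destruct first_wave_reduced as [z Hz]; destruct first_wave_limits as [L1 [L2 [L3 L4]]].
  destruct (reduced_front _ _ _ _ _ _ Hz L1 L2 L3 L4 ltac:(lra) ltac:(lra)) as [Hdl [Hsg Hzd]].
  assert (Hrel := first_wave_speed_relation); rewrite Hdl in Hrel.
  assert (Hsum : a + b + 2 = -8 * v).
  { apply (Rmult_eq_reg_l (- v)); [rewrite Hrel; field|lra]. }
  split; [lra|split; [lra|]].
  destruct (logistic_unique (- v) d ltac:(lra)) as [c Hc].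
  - intros x; rewrite <- Hzd; exact (proj1 (proj2 Hz) x).
  - exact L2.
  - now rewrite <- Hdl.
  - exists c; intros x; specialize (Hc x); specialize (Hsg x); unfold sg, d in *; unfold front1, front2.
    split; lra.
Qed.

End FirstWave.

Lemma same_up_to_translation_swap (p1 p2 g1 g2 : R -> R) :
  same_up_to_translation p1 p2 g1 g2 -> same_up_to_translation p2 p1 g2 g1.
Proof. intros [c Hc]; exists c; intros x; destruct (Hc x); now split. Qed.

Lemma same_up_to_translation_mirror (p1 p2 g1 g2 : R -> R) :
  same_up_to_translation p1 p2 (mirror g2) (mirror g1) ->
  same_up_to_translation (mirror p2) (mirror p1) g1 g2.
Proof.
  intros [c Hc]; exists (- c); intros x; destruct (Hc (- x)) as [E2 E1]; unfold mirror in *.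
  rewrite Ropp_involutive in E1, E2; replace (- (x + - c)) with (- x + c) by ring; lra.
Qed.

Lemma terrace2_of_wave_profiles (alpha s beta : R * R) (v1 v2 : R) (g1 g2 h1 h2 : R -> R) :
  wave_profile v1 g1 g2 alpha s -> wave_profile v2 h1 h2 s beta -> v1 <= v2 ->
  terrace2 alpha s beta v1 v2 g1 g2 h1 h2.
Proof.
  intros W1 W2 Hv; destruct alpha, s, beta.
  split; [apply stationary_const|split; [apply stationary_const|split; [apply stationary_const|]]].
  split; [now apply traveling_wave_of_profile|split; [now apply traveling_wave_of_profile|exact Hv]].
Qed.

Lemma wave_profiles_of_terrace2 (alpha s beta : R * R) (v1 v2 : R) (g1 g2 h1 h2 : R -> R) :
  terrace2 alpha s beta v1 v2 g1 g2 h1 h2 ->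
  wave_profile v1 g1 g2 alpha s /\ wave_profile v2 h1 h2 s beta /\ v1 <= v2.
Proof.
  intros [_ [_ [_ [T1 [T2 Hv]]]]].
  split; [now apply wave_profile_of_traveling_wave|split; [now apply wave_profile_of_traveling_wave|exact Hv]].
Qed.

Lemma speed_relations_pos (m1 m2 s e : R) : e <> 0 -> m1 * (s + 2) = e ^ 2 / 2 -> m2 * (2 - s) = e ^ 2 / 2 ->
  0 <= m1 + m2 -> 0 < m1 /\ 0 < m2.
Proof.
  intros He S1 S2 Hm; assert (0 < e ^ 2) by (apply pow2_gt_0, He).
  assert (m1 <> 0) by (intros E; rewrite E in S1; lra).
  assert (m2 <> 0) by (intros E; rewrite E in S2; lra).
  split; apply Rnot_le_lt; intros Hn; nra.
Qed.

Lemma no_flat_terrace (a v1 v2 : R) (g1 g2 h1 h2 : R -> R) :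
  wave_profile v1 g1 g2 (-1, -1) (a, a) -> wave_profile v2 h1 h2 (a, a) (1, 1) -> False.
Proof.
  intros W1 W2; assert (H1 := first_wave_flat _ _ _ _ _ W1 eq_refl).
  assert (H2 := first_wave_flat _ _ _ _ _ (wave_profile_mirror _ _ _ _ _ _ _ W2) eq_refl); lra.
Qed.

Lemma terrace_descending (a b v1 v2 : R) (g1 g2 h1 h2 : R -> R) :
  wave_profile v1 g1 g2 (-1, -1) (a, b) -> wave_profile v2 h1 h2 (a, b) (1, 1) -> v1 <= v2 -> b < a ->
  v1 = -1/4 /\ v2 = 1/4 /\ (a, b) = (1/2, -1/2) /\
  same_up_to_translation (front1 (-1/4)) (front2 (-1/4)) g1 g2 /\
  same_up_to_translation (mirror (front2 (-1/4))) (mirror (front1 (-1/4))) h1 h2.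
Proof.
  intros W1 W2 Hv Hba; assert (W2' := wave_profile_mirror _ _ _ _ _ _ _ W2).
  assert (S1 := first_wave_speed_relation _ _ _ _ _ W1).
  assert (S2 := first_wave_speed_relation _ _ _ _ _ W2').
  destruct (speed_relations_pos (- v1) v2 (a + b) (b - a)) as [Hv1 Hv2]; [lra|lra|nra|lra|].
  destruct (first_wave_classification _ _ _ _ _ W1 ltac:(lra) Hba) as [Ha [Hb Hg]].
  destruct (first_wave_classification _ _ _ _ _ W2' ltac:(lra) ltac:(lra)) as [Ha' [Hb' Hh]].
  assert (Ev1 : v1 = -1/4) by lra; assert (Ev2 : v2 = 1/4) by lra.
  split; [exact Ev1|split; [exact Ev2|split; [f_equal; lra|]]].
  rewrite Ev1 in Hg; replace (- v2) with (-1/4) in Hh by lra.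
  split; [exact Hg|now apply same_up_to_translation_mirror].
Qed.

Lemma quarter_fronts :
  wave_profile (-1/4) (front1 (-1/4)) (front2 (-1/4)) (-1, -1) (1/2, -1/2) /\
  wave_profile (1/4) (mirror (front2 (-1/4))) (mirror (front1 (-1/4))) (1/2, -1/2) (1, 1).
Proof.
  assert (Hp := front_wave_profile (-1/4) ltac:(lra)).
  replace (-1 - 6 * (-1/4), -1 - 2 * (-1/4)) with (1/2, -1/2) in Hp by (f_equal; field).
  split; [exact Hp|].
  assert (Hq := wave_profile_mirror _ _ _ _ _ _ _ Hp).
  replace (- (-1/4)) with (1/4) in Hq by field.
  replace (- (-1/2), - (1/2)) with (1/2, -1/2) in Hq by (f_equal; field).
  replace (- (-1), - (-1)) with (1, 1) in Hq by (f_equal; field).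
  exact Hq.
Qed.

Theorem theorem2 :
  exists (p1 p2 q1 q2 r1 r2 w1 w2 : R -> R),
    terrace2 (-1, -1) (1/2, -1/2) (1, 1) (-1/4) (1/4) p1 p2 q1 q2 /\
    terrace2 (-1, -1) (-1/2, 1/2) (1, 1) (-1/4) (1/4) r1 r2 w1 w2 /\
    forall (s1 : R * R) (v1 v2 : R) (g1 g2 h1 h2 : R -> R),
      terrace2 (-1, -1) s1 (1, 1) v1 v2 g1 g2 h1 h2 ->
      v1 = -1/4 /\ v2 = 1/4 /\
      ((s1 = (1/2, -1/2) /\ same_up_to_translation p1 p2 g1 g2 /\
                            same_up_to_translation q1 q2 h1 h2) \/
       (s1 = (-1/2, 1/2) /\ same_up_to_translation r1 r2 g1 g2 /\
                            same_up_to_translation w1 w2 h1 h2)).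
Proof.
  set (p1 := front1 (-1/4)); set (p2 := front2 (-1/4)).
  exists p1, p2, (mirror p2), (mirror p1), p2, p1, (mirror p1), (mirror p2).
  destruct quarter_fronts as [Hp Hq].
  split; [exact (terrace2_of_wave_profiles _ _ _ _ _ _ _ _ _ Hp Hq ltac:(lra))|].
  split; [exact (terrace2_of_wave_profiles _ _ _ _ _ _ _ _ _
    (wave_profile_swap _ _ _ _ _ _ _ Hp) (wave_profile_swap _ _ _ _ _ _ _ Hq) ltac:(lra))|].
  intros [a b] v1 v2 g1 g2 h1 h2 Ht.
  destruct (wave_profiles_of_terrace2 _ _ _ _ _ _ _ _ _ Ht) as [W1 [W2 Hv]].
  destruct (Rtotal_order b a) as [Hba|[Hab|Hab]].
  - destruct (terrace_descending a b v1 v2 g1 g2 h1 h2 W1 W2 Hv Hba) as [Hv1 [Hv2 [Hs [Hg Hh]]]].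
    split; [exact Hv1|split; [exact Hv2|left; now split]].
  - subst; destruct (no_flat_terrace _ _ _ _ _ _ _ W1 W2).
  - destruct (terrace_descending b a v1 v2 g2 g1 h2 h1 (wave_profile_swap _ _ _ _ _ _ _ W1)
      (wave_profile_swap _ _ _ _ _ _ _ W2) Hv Hab) as [Hv1 [Hv2 [Hs [Hg Hh]]]].
    injection Hs as Hb Ha; subst a b.
    split; [exact Hv1|split; [exact Hv2|right]].
    split; [reflexivity|split; now apply same_up_to_translation_swap].
Qed.
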